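(* Let $k\ge 2$ and $m\ge1$ be integers. Let $U_k$ be the $(2^k-1-k)\times(2^k-1)$ binary matrix whose columns are indexed by $1,\dots,2^k-1$ and whose rows are indexed by the integers $r\in\{1,\dots,2^k-1\}$ that are not powers of $2$, where the row indexed by $r$, with $2^t<r<2^{t+1}$, has $1$-entries exactly in columns $r$, $r-2^t$, $2^t$. Let $T_k$ be the square $(2^k-1-k)\times(2^k-1-k)$ submatrix of $U_k$ formed by the columns whose index is not a power of $2$, and $R_k$ the $(2^k-1-k)\times k$ submatrix formed by the columns indexed by $2^{k-1},\dots,2,1$ (in this order). Define the $((2^k-1)m-k)\times((2^k-1)m)$ binary block matrix \[ U_{k,m}=\left(\begin{array}{ccc|c|c} T_k&&&&R_k\\ &\ddots&&&\vdots\\ &&T_k&&R_k\\\hline &&&I_{(m-1)k}&\begin{array}{c}I_k\\ \vdots\\ I_k\end{array} \end{array}\right), \] where there are $m$ diagonal copies of $T_k$, the last block column consists of $m$ copies of $R_k$ stacked above $m-1$ copies of $I_k$, and all unspecified blocks are zero. Then $u(U_{k,m})\ge 2^{k-1}m$.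
   Context: All matrices are binary; $I_j$ is the $j\times j$ identity. For a nonempty set $S$ of columns of a binary matrix, let $z$ be the sum over the integers of the columns in $S$; $S$ is $1$-free if no entry of $z$ equals $1$. For a binary $m'\times n'$ matrix $A$ with $m'<n'$, $u(A)$ is the smallest cardinality of a nonempty $1$-free set of columns of $A$. *)

From mathcomp Require Import all_boot all_algebra.
Set Implicit Arguments. Unset Strict Implicit. Unset Printing Implicit Defensive.

Definition one_free (m' n' : nat) (A : 'M[bool]_(m', n')) (S : {set 'I_n'}) : bool :=
  [forall i : 'I_m', (\sum_(j in S) (A i j : nat))%N != 1%N].

(* u(A): smallest cardinality of a nonempty 1-free set of columns
   (the default n'.+1 is never attained when m' < n', since such a set exists). *)
Definition u (m' n' : nat) (A : 'M[bool]_(m', n')) : nat :=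
  \big[minn/n'.+1]_(S : {set 'I_n'} | (S != set0) && one_free A S) #|S|.

Definition is_pow2 (r : nat) : bool := 2 ^ trunc_log 2 r == r.

(* the row labels of U_k: integers in 1..2^k-1 that are not powers of 2,
   in increasing order; row number a of U_k has label nth 0 (nonpow k) a *)
Definition nonpow (k : nat) : seq nat := [seq r <- iota 1 (2 ^ k - 1) | ~~ is_pow2 r].

(* entry of U_k in row number a at the column with LABEL c (c in 1..2^k-1):
   with r the row label and 2^t < r < 2^(t+1), ones exactly at c = r, r-2^t, 2^t *)
Definition Uk_lab (k a c : nat) : bool :=
  let r := nth 0 (nonpow k) a in
  let t := trunc_log 2 r in
  [|| c == r, c == r - 2 ^ t | c == 2 ^ t].

(* U_k itself: column j : 'I_(2^k-1) has label j+1 *)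
Definition Uk (k : nat) : 'M[bool]_(2 ^ k - 1 - k, 2 ^ k - 1) :=
  \matrix_(i, j) Uk_lab k i j.+1.

Definition Tk_ent (k a b : nat) : bool := Uk_lab k a (nth 0 (nonpow k) b).
Definition Tk (k : nat) : 'M[bool]_(2 ^ k - 1 - k) := \matrix_(i, j) Tk_ent k i j.

Definition Rk_ent (k a b : nat) : bool := Uk_lab k a (2 ^ (k - 1 - b)).
Definition Rk (k : nat) : 'M[bool]_(2 ^ k - 1 - k, k) := \matrix_(i, j) Rk_ent k i j.

(* With p = 2^k-1-k:
   rows    : m blocks of p rows (T_k's),  then (m-1)k rows (identity part);
   columns : m blocks of p columns (T_k's), then (m-1)k columns (I_{(m-1)k}),
             then k columns (R_k's stacked over I_k's). *)
Definition Ukm_ent (k m i j : nat) : bool :=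
  let p := 2 ^ k - 1 - k in
  if i < m * p then
    if j < m * p then (j %/ p == i %/ p) && Tk_ent k (i %% p) (j %% p)
    else if j < m * p + (m - 1) * k then false
    else Rk_ent k (i %% p) (j - (m * p + (m - 1) * k))
  else
    if j < m * p then false
    else if j < m * p + (m - 1) * k then j - m * p == i - m * p
    else j - (m * p + (m - 1) * k) == (i - m * p) %% k.

(* U_{k,m}, of size (m p + (m-1) k) x (m p + (m-1) k + k), which for m >= 1
   is ((2^k-1)m - k) x ((2^k-1)m). *)
Definition Ukm (k m : nat) :
  'M[bool]_(m * (2 ^ k - 1 - k) + (m - 1) * k, m * (2 ^ k - 1 - k) + (m - 1) * k + k) :=
  \matrix_(i, j) Ukm_ent k m i j.

From mathcomp Require Import all_boot all_algebra.
From mathcomp Require Import zify.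

Set Implicit Arguments.
Unset Strict Implicit.
Unset Printing Implicit Defensive.

(* A set S of columns of U_{k,m} selects, in each of the m diagonal blocks, a
   set of labels of U_k: the labels of that block's T_k columns together with
   the powers of two of the shared R_k columns.  The identity rows force each
   column of I_{(m-1)k} to lie in S exactly when the matching R_k column does,
   so |S| is the sum over the blocks of the number of selected labels, and the
   T_k rows make each block's selection 1-free for U_k.  By induction on k,
   using the rows {2^k + s, s, 2^k}, a 1-free label set of U_k is empty if it
   avoids the powers of two and has at least 2^(k-1) elements otherwise.  As
   the powers of two are shared by all blocks, a nonempty S has at least
   2^(k-1) labels in every block. *)

Lemma not_pow2_between t c : 2 ^ t < c < 2 ^ t.+1 -> ~~ is_pow2 c.
Proof.
move=> /andP[lo hi]; rewrite /is_pow2 (@trunc_log_eq _ t) ?(ltnW lo) ?hi //.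
by rewrite neq_ltn lo.
Qed.

Lemma is_pow2_expn e : is_pow2 (2 ^ e).
Proof. by rewrite /is_pow2 trunc_expnK. Qed.

Definition Uk_one_free k (P : nat -> bool) :=
  forall r, 0 < r < 2 ^ k -> ~~ is_pow2 r ->
  count P [:: r; r - 2 ^ trunc_log 2 r; 2 ^ trunc_log 2 r] != 1.

Lemma Uk_one_free_top k P : Uk_one_free k.+1 P ->
  forall s, 0 < s < 2 ^ k -> count P [:: 2 ^ k + s; s; 2 ^ k] != 1.
Proof.
move=> freeP s /andP[s_gt0 s_lt].
have r_range : 2 ^ k <= 2 ^ k + s < 2 ^ k.+1 by rewrite expnS; lia.
have := freeP (2 ^ k + s); rewrite (trunc_log_eq _ r_range) // addKn; apply.
  by rewrite expnS; lia.
by apply: (@not_pow2_between k); rewrite expnS; lia.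
Qed.

Lemma Uk_one_free_pred k P : Uk_one_free k.+1 P -> Uk_one_free k P.
Proof.
move=> freeP r /andP[r_gt0 r_lt]; apply: freeP.
by rewrite r_gt0 (leq_trans r_lt) // leq_exp2l.
Qed.

Lemma sum_labelsS k (P : nat -> bool) :
  \sum_(1 <= c < 2 ^ k.+1) P c =
  \sum_(1 <= c < 2 ^ k) P c + P (2 ^ k) + \sum_(1 <= s < 2 ^ k) P (2 ^ k + s).
Proof.
have lt_k_kS : 2 ^ k < 2 ^ k.+1 by rewrite ltn_exp2l.
rewrite (@big_cat_nat _ _ _ (2 ^ k)) ?expn_gt0 ?(ltnW lt_k_kS) //=.
rewrite (@big_ltn _ _ _ (2 ^ k)) // -addnA.
congr (_ + (_ + _)); rewrite -[(2 ^ k).+1]add1n big_addn.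
have -> : 2 ^ k.+1 - 2 ^ k = 2 ^ k by rewrite expnS; lia.
by apply: eq_bigr => s _; rewrite addnC.
Qed.

Lemma Uk_one_free_no_pow2 k P : Uk_one_free k P ->
  (forall e, e < k -> ~~ P (2 ^ e)) -> forall c, 0 < c < 2 ^ k -> ~~ P c.
Proof.
elim: k => [|k IHk] freeP noPow c /andP[c_gt0 c_lt]; first by move: c_lt; lia.
have {}IHk := IHk (Uk_one_free_pred freeP) (fun e lt_e => noPow e (ltnW lt_e)).
have [lt_c|ge_c] := ltnP c (2 ^ k); first by rewrite IHk ?c_gt0.
have [->|ne_c] := eqVneq c (2 ^ k); first exact: noPow.
have s_range : 0 < c - 2 ^ k < 2 ^ k by move: c_lt; rewrite expnS; lia.
have := Uk_one_free_top freeP s_range; rewrite subnKC //= (negbTE (IHk _ s_range)).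
by rewrite (negbTE (noPow k (ltnSn k))); case: (P c).
Qed.

Lemma Uk_one_free_pow2 k P : Uk_one_free k P -> (exists2 e, e < k & P (2 ^ e)) ->
  2 ^ k.-1 <= \sum_(1 <= c < 2 ^ k) P c.
Proof.
elim: k => [|k IHk] freeP [e lt_e Pe] //; rewrite sum_labelsS.
have pair_count s : 0 < s < 2 ^ k -> count P [:: 2 ^ k + s; s; 2 ^ k] != 1.
  exact: Uk_one_free_top freeP s.
case Ptop: (P (2 ^ k)).
  (* the row {2^k + s, s, 2^k} forces [s] or [2^k + s] to be selected *)
  suff : \sum_(1 <= s < 2 ^ k) 1 <= \sum_(1 <= s < 2 ^ k) (P s + P (2 ^ k + s)).
    by rewrite big_split sum_nat_const_nat /=; have := expn_gt0 2 k; lia.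
  rewrite big_nat_cond [X in _ <= X]big_nat_cond.
  apply: leq_sum => s /andP[/pair_count + _]; rewrite /= Ptop.
  by case: (P s); case: (P (2 ^ k + s)).
have lt_e_k : e < k.
  by move: lt_e; rewrite ltnS leq_eqVlt => /orP[/eqP e_k|//]; rewrite -e_k Pe in Ptop.
(* the row {2^k + s, s, 2^k} forces [P (2^k + s) = P s] *)
have -> : \sum_(1 <= s < 2 ^ k) P (2 ^ k + s) = \sum_(1 <= s < 2 ^ k) P s.
  rewrite big_nat_cond [RHS]big_nat_cond; apply: eq_bigr => s /andP[/pair_count + _].
  by rewrite /= Ptop; case: (P s); case: (P (2 ^ k + s)).
have := IHk (Uk_one_free_pred freeP) (ex_intro2 _ _ e lt_e_k Pe).
by case: k lt_e_k {IHk freeP lt_e Ptop pair_count} => // k _; rewrite /= expnS; lia.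
Qed.

Lemma sum_labels_pow2 k (F : nat -> nat) :
  \sum_(1 <= c < 2 ^ k | is_pow2 c) F c = \sum_(0 <= e < k) F (2 ^ e).
Proof.
elim: k => [|k IHk]; first by rewrite !big_geq.
have lt_k_kS : 2 ^ k < 2 ^ k.+1 by rewrite ltn_exp2l.
rewrite (@big_cat_nat _ _ _ (2 ^ k)) ?expn_gt0 ?(ltnW lt_k_kS) //= IHk.
rewrite big_nat_recr //=; congr (_ + _).
rewrite big_ltn_cond // is_pow2_expn big_nat_cond big_pred0 ?addn0 //.
move=> c; apply/negbTE/negP => /andP[/andP[lo hi]].
by apply/negP; apply: (@not_pow2_between k); rewrite lo.
Qed.

Lemma mem_nonpow k c : (c \in nonpow k) = (0 < c < 2 ^ k) && ~~ is_pow2 c.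
Proof.
rewrite mem_filter mem_iota andbC; congr (_ && _).
by have := expn_gt0 2 k; lia.
Qed.

Lemma nonpow_uniq k : uniq (nonpow k).
Proof. by rewrite filter_uniq // iota_uniq. Qed.

Lemma sum_labels_nonpow k (F : nat -> nat) :
  \sum_(1 <= c < 2 ^ k) F c = \sum_(c <- nonpow k) F c + \sum_(0 <= e < k) F (2 ^ e).
Proof.
rewrite (bigID is_pow2) /= addnC sum_labels_pow2 big_filter.
by rewrite /index_iota subn1.
Qed.

Lemma size_nonpow k : size (nonpow k) = 2 ^ k - 1 - k.
Proof.
have := sum_labels_nonpow k (fun=> 1).
by rewrite !sum1_size /index_iota !size_iota; lia.
Qed.

Lemma sum_labels_Uk_cols k (F : nat -> nat) :
  \sum_(1 <= c < 2 ^ k) F c = \sum_(0 <= q < 2 ^ k - 1 - k) F (nth 0 (nonpow k) q)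
     + \sum_(0 <= j < k) F (2 ^ (k - 1 - j)).
Proof.
rewrite sum_labels_nonpow (big_nth 0) size_nonpow; congr (_ + _).
rewrite big_nat_rev /=; apply: eq_big_nat => j /andP[_ lt_j].
by rewrite add0n; congr (F (2 ^ _)); lia.
Qed.

Lemma sum_nat_mem_count (Q : pred nat) lo hi (s : seq nat) :
  uniq s -> {subset s <= [pred j | lo <= j < hi]} ->
  \sum_(lo <= j < hi) (Q j && (j \in s)) = count Q s.
Proof.
move=> s_uniq s_sub; rewrite -sum1_count big_mkcond [RHS]big_mkcond /=.
rewrite (@eq_bigr _ _ _ _ _ _ _ (fun j => if j \in s then (Q j : nat) else 0)); last first.
  by move=> j _; case: (j \in s); rewrite ?andbT ?andbF.
rewrite -big_mkcond -big_filter (perm_big s).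
  by apply: eq_bigr => j _; case: (Q j).
apply: uniq_perm; rewrite ?filter_uniq ?iota_uniq // => j.
by rewrite mem_filter mem_index_iota; apply/andb_idr => /s_sub.
Qed.

Lemma sum_nat_shift a n (G : nat -> nat) :
  \sum_(a <= j < a + n) G j = \sum_(0 <= i < n) G (a + i).
Proof.
rewrite -{1}[a]add0n big_addn addKn.
by apply: eq_bigr => i _; rewrite addnC.
Qed.

Lemma sum_nat_blocks m p (G : nat -> nat) :
  \sum_(0 <= j < m * p) G j = \sum_(0 <= b < m) \sum_(0 <= q < p) G (b * p + q).
Proof.
elim: m => [|m IHm]; first by rewrite mul0n !big_geq.
rewrite big_nat_recr //= -IHm mulSnr (@big_cat_nat _ _ _ (m * p) 0 (m * p + p)) ?leq_addr //=.
by rewrite sum_nat_shift.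
Qed.

Lemma sum_nat_periodic n k (G : nat -> nat) :
  \sum_(0 <= e < n * k) G (e %% k) = n * \sum_(0 <= e < k) G e.
Proof.
elim: n => [|n IHn]; first by rewrite mul0n big_geq.
rewrite mulSnr (@big_cat_nat _ _ _ (n * k) 0 (n * k + k)) ?leq_addr //= IHn sum_nat_shift mulSnr.
congr (_ + _); apply: eq_big_nat => i /andP[_ lt_i].
by rewrite modnMDl modn_small.
Qed.

Lemma sum_nat_Ukm_cols m p k (G : nat -> nat) :
  \sum_(0 <= j < m * p + (m - 1) * k + k) G j =
  \sum_(0 <= b < m) \sum_(0 <= q < p) G (b * p + q)
  + \sum_(0 <= e < (m - 1) * k) G (m * p + e)
  + \sum_(0 <= j < k) G (m * p + (m - 1) * k + j).
Proof.
rewrite (@big_cat_nat _ _ _ (m * p + (m - 1) * k) 0 (m * p + (m - 1) * k + k)) //=;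
  last exact: leq_addr.
rewrite (@big_cat_nat _ _ _ (m * p) 0 (m * p + (m - 1) * k)) //=; last exact: leq_addr.
by rewrite sum_nat_blocks (sum_nat_shift (m * p)) (sum_nat_shift (m * p + (m - 1) * k)).
Qed.

Lemma sum_Uk_row k r (P : pred nat) : r \in nonpow k ->
  \sum_(1 <= c < 2 ^ k) (P c && Uk_lab k (index r (nonpow k)) c) =
  count P [:: r; r - 2 ^ trunc_log 2 r; 2 ^ trunc_log 2 r].
Proof.
move=> r_lab; have := r_lab; rewrite mem_nonpow => /andP[/andP[r_gt0 r_lt] r_npow].
rewrite /Uk_lab nth_index //; set t := trunc_log 2 r.
have r_range : 2 ^ t < r < 2 ^ t.+1.
  by rewrite trunc_log_ltn // ltn_neqAle r_npow trunc_logP.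
move: r_range; rewrite expnS => r_range.
rewrite -(@sum_nat_mem_count P 1 (2 ^ k)) => [|/=|c]; last first.
- by rewrite !inE => /or3P[] /eqP->; lia.
- by rewrite !inE !negb_or andbT; repeat (apply/andP; split); apply/negP => /eqP; lia.
by apply: eq_bigr => c _; rewrite !inE.
Qed.

Section Ukm_rows.

Variables k m : nat.
Local Notation p := (2 ^ k - 1 - k).
Local Notation base := (m * p + (m - 1) * k).

(* The column of [U_{k,m}] that carries label [c] in the [b]-th copy of [U_k]:
   power-of-two labels live in the shared last block of columns. *)
Definition Ukm_col b c :=
  if is_pow2 c then base + (k - 1 - trunc_log 2 c) else b * p + index c (nonpow k).

Lemma Ukm_col_pow2 b e : Ukm_col b (2 ^ e) = base + (k - 1 - e).
Proof. by rewrite /Ukm_col is_pow2_expn trunc_expnK. Qed.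

Lemma sum_labels_Ukm_col b (R : nat -> nat -> nat) :
  \sum_(1 <= c < 2 ^ k) R c (Ukm_col b c) =
  \sum_(0 <= q < p) R (nth 0 (nonpow k) q) (b * p + q)
  + \sum_(0 <= j < k) R (2 ^ (k - 1 - j)) (base + j).
Proof.
rewrite sum_labels_Uk_cols; congr (_ + _); apply: eq_big_nat => i /andP[_ lt_i].
  have lab_i : nth 0 (nonpow k) i \in nonpow k by rewrite mem_nth ?size_nonpow.
  move: (lab_i); rewrite mem_nonpow => /andP[_ npow_i].
  by rewrite /Ukm_col (negbTE npow_i) index_uniq ?size_nonpow ?nonpow_uniq.
by rewrite Ukm_col_pow2; congr (R _ (base + _)); lia.
Qed.

Lemma Ukm_ent_Tblock b a j : b < m -> a < p ->
  Ukm_ent k m (b * p + a) j =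
   if j < m * p then (j %/ p == b) && Tk_ent k a (j %% p)
   else if j < base then false
   else Rk_ent k a (j - base).
Proof.
move=> lt_b lt_a; rewrite /Ukm_ent ifT; last by nia.
have p_gt0 : 0 < p by apply: leq_ltn_trans lt_a.
by rewrite divnMDl // (divn_small lt_a) addn0 modnMDl (modn_small lt_a).
Qed.

Lemma sum_row_Tblock b a (Q : pred nat) : b < m -> a < p ->
  \sum_(0 <= j < base + k) (Q j && Ukm_ent k m (b * p + a) j) =
  \sum_(1 <= c < 2 ^ k) (Q (Ukm_col b c) && Uk_lab k a c).
Proof.
move=> lt_b lt_a; rewrite sum_nat_Ukm_cols (sum_labels_Ukm_col b (fun c x => Q x && Uk_lab k a c)).
have p_gt0 : 0 < p by apply: leq_ltn_trans lt_a.
have Iblock_zero :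
    \sum_(0 <= e < (m - 1) * k) (Q (m * p + e) && Ukm_ent k m (b * p + a) (m * p + e)) = 0.
  rewrite big_nat_cond big1 // => e /andP[/andP[_ lt_e] _].
  by rewrite Ukm_ent_Tblock // ifF ?ifT ?andbF //; lia.
rewrite Iblock_zero addn0; congr (_ + _); last first.
  apply: eq_big_nat => j _; rewrite Ukm_ent_Tblock // !ifF; try lia.
  by rewrite addKn.
rewrite (bigD1_seq b) ?mem_index_iota ?iota_uniq //= [X in _ + X]big1_seq ?addn0; last first.
  move=> b' /andP[ne_b' /[!mem_index_iota]/andP[_ lt_b']].
  rewrite big_nat_cond big1 // => q /andP[/andP[_ lt_q] _].
  rewrite Ukm_ent_Tblock // ifT; last by nia.
  by rewrite divnMDl // (divn_small lt_q) addn0 (negbTE ne_b') andbF.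
apply: eq_big_nat => q /andP[_ lt_q]; rewrite Ukm_ent_Tblock // ifT; last by nia.
by rewrite divnMDl // (divn_small lt_q) addn0 modnMDl (modn_small lt_q) eqxx.
Qed.

Lemma sum_row_Iblock e (Q : pred nat) : e < (m - 1) * k ->
  \sum_(0 <= j < base + k) (Q j && Ukm_ent k m (m * p + e) j) =
  Q (m * p + e) + Q (base + e %% k).
Proof.
move=> lt_e; have k_gt0 : 0 < k by case: k lt_e; rewrite ?muln0.
have lt_mod := ltn_pmod e k_gt0.
have -> : Q (m * p + e) + Q (base + e %% k) = count Q [:: m * p + e; base + e %% k].
  by rewrite /= addn0.
rewrite -(@sum_nat_mem_count Q 0 (base + k)) => [|/=|j]; last first.
- by rewrite !inE => /orP[] /eqP-> /=; lia.
- by rewrite inE andbT; apply/eqP; lia.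
apply: eq_bigr => j _; congr (_ && _); rewrite /Ukm_ent ifF; last by lia.
rewrite addKn !inE.
case: (ltnP j (m * p)) => [lt_j|ge_j]; first by apply/esym/norP; split; apply/eqP; lia.
by case: (ltnP j base) => lt_j; apply/eqP/orP => [/eqP|[]/eqP]; lia.
Qed.

End Ukm_rows.

Section One_free_columns.

Variables k m : nat.
Local Notation p := (2 ^ k - 1 - k).
Local Notation base := (m * p + (m - 1) * k).
Variable S : {set 'I_(base + k)}.
Hypothesis S_one_free : one_free (Ukm k m) S.

Definition in_S (x : nat) : bool := x \in [seq val j | j in S].

Lemma in_S_val j : in_S (val j) = (j \in S).
Proof. by rewrite /in_S mem_map ?mem_enum //; apply: val_inj. Qed.

Lemma sum_row_in_S_neq1 i : i < base ->
  \sum_(0 <= j < base + k) (in_S j && Ukm_ent k m i j) != 1.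
Proof.
move=> lt_i; have := forallP S_one_free (Ordinal lt_i).
rewrite big_mkord big_mkcond; congr (_ != _); apply: eq_bigr => j _.
by rewrite in_S_val mxE; case: (j \in S).
Qed.

Lemma block_one_free b : b < m -> Uk_one_free k (fun c => in_S (Ukm_col k m b c)).
Proof.
move=> lt_b r r_range r_npow; have r_lab : r \in nonpow k by rewrite mem_nonpow r_range.
have lt_a : index r (nonpow k) < p by rewrite -size_nonpow index_mem.
have lt_row : b * p + index r (nonpow k) < base by nia.
by have := sum_row_in_S_neq1 lt_row; rewrite sum_row_Tblock // sum_Uk_row.
Qed.

Lemma in_S_Iblock e : e < (m - 1) * k -> in_S (m * p + e) = in_S (base + e %% k).
Proof.
move=> lt_e; have lt_row : m * p + e < base by lia.
have := sum_row_in_S_neq1 lt_row; rewrite sum_row_Iblock //.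
by case: (in_S (m * p + e)); case: (in_S (base + e %% k)).
Qed.

Lemma card_S_blocks : 0 < m ->
  #|S| = \sum_(0 <= b < m) \sum_(1 <= c < 2 ^ k) in_S (Ukm_col k m b c).
Proof.
move=> m_gt0; have -> : #|S| = \sum_(0 <= j < base + k) in_S j.
  rewrite -sum1_card big_mkcond big_mkord /=; apply: eq_bigr => j _.
  by rewrite in_S_val; case: (j \in S).
rewrite sum_nat_Ukm_cols.
rewrite (@eq_big_nat _ _ _ 0 ((m - 1) * k) _ (fun e => in_S (base + e %% k) : nat)); last first.
  by move=> e /andP[_ lt_e]; rewrite in_S_Iblock.
rewrite (sum_nat_periodic (m - 1) k (fun x => in_S (base + x))).
under [RHS]eq_bigr do rewrite (sum_labels_Ukm_col k m _ (fun _ x => in_S x)).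
rewrite big_split /= sum_nat_const_nat subn0 -addnA -mulSnr.
by have -> : (m - 1).+1 = m by lia.
Qed.

Lemma one_free_card_ge : 0 < m -> S != set0 -> 2 ^ (k - 1) * m <= #|S|.
Proof.
move=> m_gt0 S_ne; rewrite card_S_blocks //.
case: (boolP [exists j : 'I_k, in_S (base + j)]) => [/existsP[j S_j] | /existsPn R_out].
  have block_ge b : b < m -> 2 ^ (k - 1) <= \sum_(1 <= c < 2 ^ k) in_S (Ukm_col k m b c).
    move=> lt_b; rewrite subn1; apply: Uk_one_free_pow2 (block_one_free lt_b) _.
    have lt_j := ltn_ord j; exists (k - 1 - j); first lia.
    by rewrite Ukm_col_pow2 (_ : k - 1 - (k - 1 - j) = j) //; lia.
  rewrite mulnC -{1}[m]subn0 -sum_nat_const_nat big_nat_cond [X in _ <= X]big_nat_cond.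
  by apply: leq_sum => b /andP[/andP[_ /block_ge]].
have block_empty b : b < m -> \sum_(1 <= c < 2 ^ k) in_S (Ukm_col k m b c) = 0.
  move=> lt_b; rewrite big_nat_cond big1 // => c /andP[c_range _].
  apply/eqP; rewrite eqb0 (Uk_one_free_no_pow2 (block_one_free lt_b)) // => e lt_e.
  have lt_ke : k - 1 - e < k by lia.
  by rewrite Ukm_col_pow2; apply: (R_out (Ordinal lt_ke)).
move: S_ne; rewrite -card_gt0 card_S_blocks // big_nat_cond big1 //.
by move=> b /andP[/andP[_ /block_empty]].
Qed.

End One_free_columns.

Theorem mainTheorem7 (k m : nat) (hk : 2 <= k) (hm : 1 <= m) :
  2 ^ (k - 1) * m <= u (Ukm k m).
Proof.
rewrite /u; apply: (big_ind (fun x => 2 ^ (k - 1) * m <= x)).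
- have : 2 ^ (k - 1) * 2 = 2 ^ k by rewrite -expnSr; congr (2 ^ _); lia.
  have := ltn_expl k (ltnSn 1); nia.
- by move=> x y; rewrite leq_min => -> ->.
- by move=> S /andP[S_ne S_free]; apply: one_free_card_ge.
Qed.
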